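(* Let $a,b\in C\ell_2\setminus\mathbb{R}$ with $a_0=b_0$ and $G(a)=G(b)$, and let $F=L(a)-R(b)$. Then the Moore–Penrose inverse of the real matrix $F$ is $$F^+=\frac{L(a')-R(b')}{2(|Cim(a)|^2+|Cim(b)|^2)}.$$
   Context: $C\ell_2$ is the 4-dimensional real associative algebra with basis $1,e_1,e_2,e_3$ and multiplication $e_1^2=e_2^2=1$, $e_3^2=-1$, $e_1e_2=e_3=-e_2e_1$, $e_1e_3=e_2=-e_3e_1$, $e_3e_2=e_1=-e_2e_3$; $\mathbb{R}$ is identified with $\mathbb{R}\cdot 1$. Write $a=a_0+a_1e_1+a_2e_2+a_3e_3$, $b=b_0+b_1e_1+b_2e_2+b_3e_3$. Notation: $a'=a_0+a_1e_1+a_2e_2-a_3e_3$, $G(a)=a_1^2+a_2^2-a_3^2$, $|Cim(a)|^2=a_1^2+a_2^2+a_3^2$, $$L(a)=\begin{pmatrix} a_0&a_1&a_2&-a_3\\ a_1&a_0&a_3&-a_2\\ a_2&-a_3&a_0&a_1\\ a_3&-a_2&a_1&a_0\end{pmatrix},\qquad R(a)=\begin{pmatrix} a_0&a_1&a_2&-a_3\\ a_1&a_0&-a_3&a_2\\ a_2&a_3&a_0&-a_1\\ a_3&a_2&-a_1&a_0\end{pmatrix}.$$ The Moore–Penrose inverse $F^+$ of a real matrix $F$ is the unique $X$ with $FXF=F$, $XFX=X$, $(FX)^T=FX$, $(XF)^T=XF$. *)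

From mathcomp Require Import all_boot all_order all_algebra.
Set Implicit Arguments. Unset Strict Implicit. Unset Printing Implicit Defensive.
Import Order.TTheory GRing.Theory Num.Theory.
Local Open Scope ring_scope.

(* Elements of Cl_2 : a = a0 + a1 e1 + a2 e2 + a3 e3 *)
Record cl2 (R : Type) := Cl2 { c0 : R; c1 : R; c2 : R; c3 : R }.

Section Cl2.
Variable R : realFieldType.

Definition cl2_nonreal (a : cl2 R) : Prop :=
  ~ (c1 a = 0 /\ c2 a = 0 /\ c3 a = 0).

Definition cl2_prime (a : cl2 R) : cl2 R := Cl2 (c0 a) (c1 a) (c2 a) (- c3 a).

Definition cl2_G (a : cl2 R) : R := c1 a ^+ 2 + c2 a ^+ 2 - c3 a ^+ 2.

Definition cl2_Cim2 (a : cl2 R) : R := c1 a ^+ 2 + c2 a ^+ 2 + c3 a ^+ 2.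

Definition mx4 (m : nat -> nat -> R) : 'M[R]_4 := \matrix_(i < 4, j < 4) m i j.

Definition Lmx (a : cl2 R) : 'M[R]_4 :=
  let: Cl2 a0 a1 a2 a3 := a in
  mx4 (fun i j =>
    match i, j with
    | 0, 0 => a0 | 0, 1 => a1 | 0, 2 => a2 | 0, _ => - a3
    | 1, 0 => a1 | 1, 1 => a0 | 1, 2 => a3 | 1, _ => - a2
    | 2, 0 => a2 | 2, 1 => - a3 | 2, 2 => a0 | 2, _ => a1
    | _, 0 => a3 | _, 1 => - a2 | _, 2 => a1 | _, _ => a0
    end)%N.

Definition Rmx (a : cl2 R) : 'M[R]_4 :=
  let: Cl2 a0 a1 a2 a3 := a in
  mx4 (fun i j =>
    match i, j with
    | 0, 0 => a0 | 0, 1 => a1 | 0, 2 => a2 | 0, _ => - a3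
    | 1, 0 => a1 | 1, 1 => a0 | 1, 2 => - a3 | 1, _ => a2
    | 2, 0 => a2 | 2, 1 => a3 | 2, 2 => a0 | 2, _ => - a1
    | _, 0 => a3 | _, 1 => a2 | _, 2 => - a1 | _, _ => a0
    end)%N.

End Cl2.

Definition is_MP_inverse (R : realFieldType) (m n : nat)
  (F : 'M[R]_(m, n)) (X : 'M[R]_(n, m)) : Prop :=
  [/\ F *m X *m F = F, X *m F *m X = X,
      (F *m X)^T = F *m X & (X *m F)^T = X *m F].

From mathcomp Require Import all_boot all_order all_algebra ring.
Import Order.TTheory GRing.Theory Num.Theory.
Local Open Scope ring_scope.

(* Since L(a') and R(b') are the transposes of L(a) and R(b), the claimed
   inverse is F^T / s with s = 2 (|Cim a|^2 + |Cim b|^2).  A direct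
   computation, using a0 = b0 and G(a) = G(b), gives F F^T F = s F, and any
   matrix with this property and s <> 0 has Moore-Penrose inverse F^T / s:
   the four Penrose equations follow from it and its transpose. *)

Lemma is_MP_inverse_trmx (R : realFieldType) (m n : nat) (F : 'M[R]_(m, n)) (s : R) :
  s != 0 -> F *m F^T *m F = s *: F -> is_MP_inverse F (s^-1 *: F^T).
Proof.
move=> s_neq0 FFtF.
have FtFFt : F^T *m F *m F^T = s *: F^T.
  have -> : F^T *m F *m F^T = (F *m F^T *m F)^T by rewrite !trmx_mul trmxK mulmxA.
  by rewrite FFtF linearZ.
split.
- by rewrite -scalemxAr -scalemxAl FFtF scalerA mulVf // scale1r.
- rewrite -scalemxAl -!scalemxAr -scalemxAl FtFFt !scalerA.
  by rewrite -mulrA mulVf // mulr1.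
- by rewrite -scalemxAr linearZ /= trmx_mul trmxK.
- by rewrite -scalemxAl linearZ /= trmx_mul trmxK.
Qed.

Section Mx4.
Variable R : realFieldType.
Implicit Types f g : nat -> nat -> R.

Lemma eq_mx4 f g :
  (forall i j, (i < 4)%N -> (j < 4)%N -> f i j = g i j) -> mx4 f = mx4 g.
Proof. by move=> eq_fg; apply/matrixP => i j; rewrite !mxE eq_fg. Qed.

Lemma trmx_mx4 f : (mx4 f)^T = mx4 (fun i j => f j i).
Proof. by apply/matrixP => i j; rewrite !mxE. Qed.

Lemma sub_mx4 f g : mx4 f - mx4 g = mx4 (fun i j => f i j - g i j).
Proof. by apply/matrixP => i j; rewrite !mxE. Qed.

Lemma scale_mx4 (k : R) f : k *: mx4 f = mx4 (fun i j => k * f i j).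
Proof. by apply/matrixP => i j; rewrite !mxE. Qed.

Lemma mul_mx4 f g :
  mx4 f *m mx4 g =
  mx4 (fun i j =>
    f i 0%N * g 0%N j + f i 1%N * g 1%N j + f i 2%N * g 2%N j + f i 3%N * g 3%N j).
Proof.
by apply/matrixP => i j; rewrite !mxE !big_ord_recr big_ord0 /= !mxE add0r.
Qed.

End Mx4.

Section Cl2Matrices.
Variable R : realFieldType.
Implicit Types a b : cl2 R.

Lemma Lmx_prime a : Lmx (cl2_prime a) = (Lmx a)^T.
Proof.
case: a => a0 a1 a2 a3; rewrite trmx_mx4; apply: eq_mx4.
by move=> [|[|[|[|i]]]] [|[|[|[|j]]]] //= _ _; rewrite opprK.
Qed.

Lemma Rmx_prime a : Rmx (cl2_prime a) = (Rmx a)^T.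
Proof.
case: a => a0 a1 a2 a3; rewrite trmx_mx4; apply: eq_mx4.
by move=> [|[|[|[|i]]]] [|[|[|[|j]]]] //= _ _; rewrite opprK.
Qed.

Lemma Lmx_subRmx_cube a b : c0 a = c0 b -> cl2_G a = cl2_G b ->
  let F := Lmx a - Rmx b in
  F *m F^T *m F = (2 * (cl2_Cim2 a + cl2_Cim2 b)) *: F.
Proof.
case: a b => a0 a1 a2 a3 [b0 b1 b2 b3]; rewrite /cl2_G /cl2_Cim2 /= => <- eq_G.
(* [ring:] rewrites left to right, so the hypothesis needs a monomial left side. *)
have eq_b3 : b3 ^+ 2 = b1 ^+ 2 + b2 ^+ 2 - (a1 ^+ 2 + a2 ^+ 2 - a3 ^+ 2).
  by rewrite eq_G; ring.
rewrite sub_mx4 trmx_mx4 !mul_mx4 scale_mx4; apply: eq_mx4.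
by move=> [|[|[|[|i]]]] [|[|[|[|j]]]] //= _ _; ring: eq_b3.
Qed.

Lemma cl2_Cim2_gt0 a : cl2_nonreal a -> 0 < cl2_Cim2 a.
Proof.
case: a => a0 a1 a2 a3; rewrite /cl2_nonreal /cl2_Cim2 /= => nonreal.
rewrite lt_def !addr_ge0 ?sqr_ge0 // andbT; apply: contra_notN nonreal.
rewrite paddr_eq0 ?addr_ge0 ?sqr_ge0 // paddr_eq0 ?sqr_ge0 // !sqrf_eq0.
by case/andP => /andP[/eqP -> /eqP ->] /eqP ->.
Qed.

End Cl2Matrices.

Theorem lemma5p2 (R : realFieldType) (a b : cl2 R) :
  cl2_nonreal a -> cl2_nonreal b ->
  c0 a = c0 b -> cl2_G a = cl2_G b ->
  is_MP_inverse (Lmx a - Rmx b)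
    ((2 * (cl2_Cim2 a + cl2_Cim2 b))^-1 *: (Lmx (cl2_prime a) - Rmx (cl2_prime b))).
Proof.
move=> /cl2_Cim2_gt0 a_gt0 /cl2_Cim2_gt0 b_gt0 eq_c0 eq_G.
rewrite Lmx_prime Rmx_prime -linearB.
apply: is_MP_inverse_trmx; last exact: Lmx_subRmx_cube.
by rewrite mulf_neq0 // gt_eqF // addr_gt0.
Qed.
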